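(* For every $K\in\mathcal{S}_n$, \[K=\bigcap_{x\in\mathbb{R}^n}\bigl(x+\delta(\{x\},K)\,B_2^n\bigr).\]
   Context: $B_2^n$ is the closed Euclidean unit ball in $\mathbb{R}^n$; $\delta$ is the Hausdorff distance $\delta(K_0,K_1)=\inf\{\lambda>0: K_0\subseteq K_1+\lambda B_2^n,\ K_1\subseteq K_0+\lambda B_2^n\}$. $\mathcal{S}_n$ is the set of convex bodies (compact convex non-empty sets) in $\mathbb{R}^n$ which are intersections of Euclidean unit balls. *)

From HB Require Import structures.
From mathcomp Require Import all_boot all_order all_algebra.
From mathcomp Require Import all_classical all_reals all_analysis.
Set Implicit Arguments. Unset Strict Implicit. Unset Printing Implicit Defensive.
Import Order.TTheory GRing.Theory Num.Theory.
Import numFieldNormedType.Exports.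
Local Open Scope classical_set_scope.
Local Open Scope ring_scope.

Definition enorm (R : realType) (n : nat) (v : 'rV[R]_n) : R :=
  Num.sqrt (\sum_(i < n) (v ord0 i) ^+ 2).

Definition eball (R : realType) (n : nat) (c : 'rV[R]_n) (r : R) : set 'rV[R]_n :=
  [set y | enorm (y - c) <= r].

Definition mink_ball (R : realType) (n : nat) (A : set 'rV[R]_n) (r : R)
  : set 'rV[R]_n :=
  [set y | exists2 a, A a & enorm (y - a) <= r].

Definition hausdorff (R : realType) (n : nat) (K0 K1 : set 'rV[R]_n) : R :=
  inf [set l : R | 0 < l /\ K0 `<=` mink_ball K1 l /\ K1 `<=` mink_ball K0 l].

Definition convex_set_rV (R : realType) (n : nat) (K : set 'rV[R]_n) : Prop :=
  forall x y (t : R), K x -> K y -> 0 <= t -> t <= 1 ->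
    K (t *: x + (1 - t) *: y).

Definition convex_body (R : realType) (n : nat) (K : set 'rV[R]_n) : Prop :=
  [/\ compact K, convex_set_rV K & K !=set0].

Definition S_n (R : realType) (n : nat) (K : set 'rV[R]_n) : Prop :=
  convex_body K /\
  exists C : set 'rV[R]_n, K = \bigcap_(c in C) eball c 1.

From HB Require Import structures.
From mathcomp Require Import all_boot all_order all_algebra.
From mathcomp Require Import all_classical all_reals all_analysis.
From mathcomp Require Import lra.
Import Order.TTheory GRing.Theory Num.Theory.
Import numFieldNormedType.Exports.
Local Open Scope classical_set_scope.
Local Open Scope ring_scope.

Set Implicit Arguments.
Unset Strict Implicit.
Unset Printing Implicit Defensive.

(* For a point x and a nonempty bounded K, the admissible radii of
   delta({x}, K) are exactly the l > 0 with K inside x + l B_2^n; hence every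
   point of K lies in x + delta({x}, K) B_2^n.  Conversely, if K is contained
   in a unit ball c + B_2^n then delta({c}, K) <= 1, so a point lying in all
   the balls x + delta({x}, K) B_2^n lies in every unit ball defining K. *)

Section HausdorffPoint.
Variables (R : realType) (n : nat).
Implicit Types (K : set 'rV[R]_n) (x y z v : 'rV[R]_n) (l N : R).

Lemma enorm_distC x y : enorm (x - y) = enorm (y - x).
Proof.
rewrite /enorm; congr Num.sqrt; apply: eq_bigr => i _.
by rewrite -opprB mxE sqrrN.
Qed.

Lemma enorm_le_mx_norm v N : `|v| <= N -> enorm v <= Num.sqrt (n%:R * N ^+ 2).
Proof.
move=> vN; rewrite /enorm; apply: ler_wsqrtr.
apply: (@le_trans _ _ (\sum_(i < n) N ^+ 2)).
  apply: ler_sum => i _.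
  have : `|v ord0 i| <= N.
    apply: le_trans vN.
    have := le_bigmax 0 (fun ij : 'I_1 * 'I_n => `|v ij.1 ij.2|) (ord0, i).
    by rewrite -mx_normrE.
  rewrite ler_norml => /andP [? ?]; nra.
by rewrite sumr_const card_ord mulr_natl.
Qed.

Lemma bounded_set_enorm K :
  bounded_set K -> forall x, exists B, forall z, K z -> enorm (z - x) <= B.
Proof.
move=> [M [_ KM]] x; exists (Num.sqrt (n%:R * (`|M| + 1 + `|x|) ^+ 2)).
move=> z Kz; apply: enorm_le_mx_norm.
apply: (le_trans (ler_normB z x)); rewrite lerD2r.
by apply: KM => //; rewrite (le_lt_trans (ler_norm M)) ?ltrDl.
Qed.

Definition hausdorff_radii (K0 K1 : set 'rV[R]_n) : set R :=
  [set l | 0 < l /\ K0 `<=` mink_ball K1 l /\ K1 `<=` mink_ball K0 l].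

Lemma hausdorff_le_radius (K0 K1 : set 'rV[R]_n) l :
  hausdorff_radii K0 K1 l -> hausdorff K0 K1 <= l.
Proof. by apply: ge_inf; exists 0 => r [/ltW]. Qed.

Lemma hausdorff_radii_point x K l :
  K !=set0 -> 0 < l -> (forall z, K z -> enorm (z - x) <= l) ->
  hausdorff_radii [set x] K l.
Proof.
move=> [y Ky] l_gt0 Kxl; split=> //; split=> [a /= ->|z Kz].
- by exists y; rewrite // enorm_distC; apply: Kxl.
- by exists x; [|apply: Kxl].
Qed.

Lemma enorm_le_hausdorff_point x K y :
  K !=set0 -> bounded_set K -> K y -> enorm (y - x) <= hausdorff [set x] K.
Proof.
move=> K0 Kb Ky; apply: lb_le_inf => [|l [_ [_ Kxl]]].
- have [B KB] := bounded_set_enorm Kb x.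
  exists (`|B| + 1); apply: hausdorff_radii_point => // z Kz.
  apply: le_trans (KB z Kz) _; apply: le_trans (ler_norm B) _.
  by rewrite lerDl.
- by have [a /= -> ya] := Kxl y Ky.
Qed.

End HausdorffPoint.

Theorem lemma13 (R : realType) (n : nat) (K : set 'rV[R]_n) :
  S_n K ->
  K = \bigcap_(x in [set: 'rV[R]_n]) eball x (hausdorff [set x] K).
Proof.
move=> [[cK _ K0] [C KC]]; apply/seteqP; split=> [y Ky x _|y Ky].
  exact: enorm_le_hausdorff_point (compact_bounded cK) Ky.
rewrite KC => c Cc; apply: le_trans (Ky c I) _.
apply/hausdorff_le_radius/hausdorff_radii_point => // z.
by rewrite KC => /(_ c Cc).
Qed.
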